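(* Let $\hat B$ be the bus susceptance matrix of a connected power network with bus set $\mathcal N$, let $\mathcal T \subseteq \mathcal N$ with $|\mathcal T| \ge 2$, and fix $t \in \mathcal T$. Let $\theta$ be a random vector in $\mathbb R^{\mathcal N}$ with finite second moments and $\theta_t = 0$; let $S$ be a random bus uniformly distributed on $\mathcal T \setminus \{t\}$; and let $\Gamma$ be a real random variable with mean $0$ and variance $\sigma_\Gamma^2$; assume $\theta$, $S$, $\Gamma$ are mutually independent. Let $\hat\theta$ be the random vector with $\hat\theta_t = 0$ and $\hat B\hat\theta = \hat B\theta + \Gamma u^{S,t}$. Then $$\sigma^2_{\hat\theta} \;=\; \sigma^2_{\theta} + \frac{\sigma_\Gamma^2}{|\mathcal T| - 1}\sum_{s \in \mathcal T\setminus\{t\}} v^{s,t}(v^{s,t})^\top,$$ where $\sigma^2_X$ denotes the covariance matrix of a random vector $X$.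
   Context: DC power flow model: each line $km$ has reactance $x_{km} > 0$, and $\hat B_{kk} = \sum_{km \ni k} 1/x_{km}$, $\hat B_{km} = -1/x_{km}$ for a line $km$, $\hat B_{km} = 0$ otherwise. For distinct buses $s,t$, $u^{s,t}_s = 1$, $u^{s,t}_t = -1$, $u^{s,t}_k = 0$ otherwise, and $v^{s,t}$ is the unique vector with $\hat B v^{s,t} = u^{s,t}$ and $v^{s,t}_t = 0$. (In the paper $\theta$ represents phase angles with reference bus $t$ absent the defense, $\hat\theta$ the phase angles after the random injection $\Gamma$ at $S$ and $-\Gamma$ at $t$.) *)

From HB Require Import structures.
From mathcomp Require Import all_boot all_order all_algebra.
From mathcomp Require Import all_classical all_reals all_analysis.
Set Implicit Arguments. Unset Strict Implicit. Unset Printing Implicit Defensive.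
Import Order.TTheory GRing.Theory Num.Theory.
Local Open Scope classical_set_scope.
Local Open Scope ring_scope.

(* Buses are 'I_n; lines are given by a symmetric irreflexive relation e,
   with reactance x k m on line km. *)
Definition is_network (n : nat) (R : realType) (e : rel 'I_n)
    (x : 'I_n -> 'I_n -> R) : Prop :=
  [/\ forall k, ~~ e k k,
      forall k m, e k m = e m k,
      forall k m, e k m -> x k m = x m k,
      forall k m, e k m -> 0 < x k m
    & forall k m, connect e k m ].

Definition Bhat (n : nat) (R : realType) (e : rel 'I_n)
    (x : 'I_n -> 'I_n -> R) : 'M[R]_n :=
  \matrix_(k, m)
    if k == m then \sum_(j | e k j) (x k j)^-1
    else if e k m then - (x k m)^-1 else 0.

Definition uvec (n : nat) (R : realType) (s t : 'I_n) : 'cV[R]_n :=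
  \col_k (if k == s then 1 else if k == t then -1 else 0).

Definition is_vst (n : nat) (R : realType) (B : 'M[R]_n) (s t : 'I_n)
    (v : 'cV[R]_n) : Prop :=
  B *m v = uvec R s t /\ v t 0 = 0.

Definition rvec (n : nat) (R : realType) (Omega : Type)
    (X : 'I_n -> Omega -> R) (w : Omega) : 'cV[R]_n :=
  \col_k X k w.

Definition covmx d (Omega : measurableType d) (R : realType)
    (P : probability Omega R) (n : nat) (X : 'I_n -> Omega -> R) : 'M[R]_n :=
  \matrix_(i, j) fine (covariance P (X i) (X j)).

(* mutual independence of the random vector theta, the random bus S and the
   real random variable G, stated on the generating pi-systems
   (measurable rectangles for theta, all subsets of buses, Borel sets). *)
Definition mutually_indep3 d (Omega : measurableType d) (R : realType)
    (P : probability Omega R) (n : nat) (theta : 'I_n -> Omega -> R)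
    (S : Omega -> 'I_n) (G : Omega -> R) : Prop :=
  forall (A : 'I_n -> set R) (B : set 'I_n) (C : set R),
    (forall i, measurable (A i)) -> measurable C ->
    let EA := [set w | forall i, A i (theta i w)] in
    P (EA `&` S @^-1` B `&` G @^-1` C)
    = (P EA * P (S @^-1` B) * P (G @^-1` C))%E.

From HB Require Import structures.
From mathcomp Require Import all_boot all_order all_algebra.
From mathcomp Require Import all_classical all_reals all_analysis.
From mathcomp Require Import measurable_realfun.
Import Order.TTheory GRing.Theory Num.Theory.
Set Implicit Arguments. Unset Strict Implicit. Unset Printing Implicit Defensive.
Local Open Scope classical_set_scope.
Local Open Scope ring_scope.

(* Since the network is connected, the kernel of Bhat consists of the constant
   vectors, so Bhat is injective on vectors vanishing at t and
   thetah = theta + G v^{S,t}.  Write G v^{S,t} = sum_s Z_s v^{s,t} with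
   Z_s = G 1{S = s}.  Independence of G from (theta, S) and E G = 0 make every
   Z_s uncorrelated with theta and the Z_s pairwise uncorrelated, with
   Var Z_s = P(S = s) Var G = sigma2 / (|T| - 1); bilinearity of the covariance
   then gives the formula. *)

Section grounded_susceptance.
Variables (R : realType) (n : nat) (e : rel 'I_n) (x : 'I_n -> 'I_n -> R).

Lemma Bhat_mulmx_col (y : 'cV[R]_n) k : (forall k, ~~ e k k) ->
  (Bhat e x *m y) k 0 = \sum_(j | e k j) (y k 0 - y j 0) / x k j.
Proof.
move=> irr; rewrite mxE (bigD1 k) //= mxE eqxx.
under [RHS]eq_bigr => j _ do rewrite mulrBl.
rewrite sumrB -mulr_sumr mulrC; congr (_ + _).
rewrite (big_mkcond (fun j => j != k)) (big_mkcond (e k)) -sumrN.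
apply: eq_bigr => j _; rewrite mxE.
have [->|_] := eqVneq j k; first by rewrite (negbTE (irr k)) oppr0.
by case: (e k j); rewrite /= ?mul0r ?oppr0 // mulNr mulrC.
Qed.

(* Maximum principle: at a maximiser k of y, the k-th row of [Bhat e x *m y = 0]
   is a sum of nonnegative terms, so y is maximal at every neighbour of k too;
   by connectivity y is constant. *)
Lemma Bhat_grounded_ker (y : 'cV[R]_n) t : is_network e x ->
  Bhat e x *m y = 0 -> y t 0 = 0 -> y = 0.
Proof.
case=> irr sym _ xpos conn By0 yt0.
have [k0 _ yk0_max] := @arg_maxP _ _ _ t predT (fun j => y j 0) erefl.
set M := y k0 0 in yk0_max.
have max_nbr k j : y k 0 = M -> e k j -> y j 0 = M.
  move=> ykM ekj.
  have term_ge0 i : e k i -> 0 <= (y k 0 - y i 0) / x k i.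
    move=> eki; apply: divr_ge0; last exact/ltW/xpos.
    by rewrite subr_ge0 ykM; exact: yk0_max.
  have /esym row0 := Bhat_mulmx_col y k irr; rewrite By0 mxE in row0.
  move/eqP: (psumr_eq0P term_ge0 row0 ekj).
  by rewrite mulf_eq0 invr_eq0 (gt_eqF (xpos _ _ ekj)) orbF subr_eq0 => /eqP <-.
have max_closed : fingraph.closed e [pred j | y j 0 == M].
  move=> k j ekj /=; apply/eqP/eqP => [/max_nbr|/max_nbr]; first exact.
  by apply; rewrite sym.
have yM m : y m 0 = M.
  by apply/eqP; rewrite -[_ == _]/(m \in [pred j | y j 0 == M])
    -(closed_connect max_closed (conn k0 m)) inE.
by apply/matrixP => i j; rewrite ord1 mxE yM -(yM t) yt0.
Qed.

Lemma Bhat_grounded_solution (s t : 'I_n) (v y yh : 'cV[R]_n) (g : R) :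
  is_network e x -> is_vst (Bhat e x) s t v ->
  Bhat e x *m yh = Bhat e x *m y + g *: uvec R s t ->
  yh t 0 = 0 -> y t 0 = 0 -> yh = y + g *: v.
Proof.
move=> net [Bv vt0] hB yht0 yt0; apply/eqP; rewrite -subr_eq0; apply/eqP.
apply: (Bhat_grounded_ker net _ (t := t)).
  by rewrite mulmxBr mulmxDr hB -scalemxAr Bv subrr.
by rewrite !mxE yht0 yt0 vt0 mulr0 addr0 subrr.
Qed.

End grounded_susceptance.

Lemma measurable_funT_preimage d1 d2 (T1 : measurableType d1)
    (T2 : measurableType d2) (f : T1 -> T2) (A : set T2) :
  measurable_fun setT f -> measurable A -> measurable (f @^-1` A).
Proof. by move=> mf mA; rewrite -[_ @^-1` _]setTI; exact: mf. Qed.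

Lemma Lfun_measurable d (T : measurableType d) (R : realType)
    (mu : {measure set T -> \bar R}) p (f : T -> R) :
  f \in Lfun mu p -> measurable_fun setT f.
Proof. by rewrite inE => /andP[]; rewrite inE. Qed.

Section product_moment.
Local Open Scope ereal_scope.
Context (R : realType) (mu1 mu2 : probability R R).
Hypotheses (mu1_int : mu1.-integrable setT EFin)
  (mu2_int : mu2.-integrable setT EFin).

Lemma integrable_prod_mulr :
  (mu1 \x mu2).-integrable setT (EFin \o (fun z : R * R => z.1 * z.2)%R).
Proof.
have [_ mu1_abs] := integrableP _ _ _ mu1_int.
have [_ mu2_abs] := integrableP _ _ _ mu2_int.
apply/integrable12ltyP => /=.
  apply/measurable_EFinP.
  by apply: measurable_funM; [exact: measurable_fst|exact: measurable_snd].
under eq_integral => x _.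
  under eq_integral => y _ do rewrite normrM EFinM.
  rewrite ge0_integralZl //; last first.
    by apply: measurableT_comp => //; exact: measurableT_comp.
  over.
rewrite /= ge0_integralZr //; last 2 first.
- by apply: measurableT_comp => //; exact: measurableT_comp.
- exact: integral_ge0.
by rewrite lte_mul_pinfty ?ge0_fin_numE ?integral_ge0.
Qed.

Lemma integral_prod_mulr :
  \int[mu1 \x mu2]_z (z.1 * z.2)%:E = \int[mu1]_x x%:E * \int[mu2]_y y%:E.
Proof.
have fin2 := integrable_fin_num measurableT mu2_int.
rewrite -(integral12_prod_meas1 integrable_prod_mulr) /fubini_F /=.
under eq_integral => x _.
  under eq_integral => y _ do rewrite EFinM.
  rewrite (integralZl measurableT mu2_int) -(fineK fin2).
  over.
by rewrite /= (integralZr measurableT mu1_int) fineK.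
Qed.

End product_moment.

Section independence.
Local Open Scope ereal_scope.
Context d (Omega : measurableType d) (R : realType) (P : probability Omega R).

Definition independent_rv (X Y : Omega -> R) :=
  forall A C : set R, measurable A -> measurable C ->
  P (X @^-1` A `&` Y @^-1` C) = P (X @^-1` A) * P (Y @^-1` C).

Lemma independent_rv_comp (X Y : Omega -> R) (f g : R -> R) :
  measurable_fun setT f -> measurable_fun setT g ->
  independent_rv X Y -> independent_rv (f \o X) (g \o Y).
Proof.
move=> mf mg XY A C mA mC.
exact: XY (measurable_funT_preimage mf mA) (measurable_funT_preimage mg mC).
Qed.

Lemma integrable_distribution (X : {mfun Omega >-> R}) :
  (X : Omega -> R) \in Lfun P 1 -> (distribution P X).-integrable setT EFin.
Proof.
move=> /Lfun1_integrable /integrableP[_ X_abs].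
apply/integrableP; split; first exact/measurable_EFinP.
rewrite ge0_integral_distribution //.
by apply: measurableT_comp => //; exact: measurableT_comp.
Qed.

Lemma expectation_distribution (X : {mfun Omega >-> R}) :
  (X : Omega -> R) \in Lfun P 1 -> 'E_P[X] = \int[distribution P X]_x x%:E.
Proof.
move=> /Lfun1_integrable X1.
by rewrite unlock integral_distribution //; exact/measurable_EFinP.
Qed.

(* The joint law of independent X and Y is the product of the marginal laws,
   so Fubini splits the integral of [z.1 * z.2] against it. *)
Lemma expectation_mul_independent (X Y : Omega -> R) :
  X \in Lfun P 1 -> Y \in Lfun P 1 -> independent_rv X Y ->
  'E_P[X \* Y] = 'E_P[X] * 'E_P[Y].
Proof.
move=> X1 Y1 XY.
have mX := Lfun_measurable X1; have mY := Lfun_measurable Y1.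
pose XX : {mfun Omega >-> R} := Sub X (mem_set mX).
pose YY : {mfun Omega >-> R} := Sub Y (mem_set mY).
pose ZZ : {mfun Omega >-> (R * R)%type} :=
  Sub (fun w => (X w, Y w)) (mem_set (measurable_fun_pair mX mY)).
pose mulz (z : R * R) := (z.1 * z.2)%R.
have mmulz : measurable_fun setT mulz.
  by apply: measurable_funM; [exact: measurable_fst|exact: measurable_snd].
have law_prod A : measurable A ->
    (distribution P XX \x distribution P YY) A = distribution P ZZ A.
  by apply: product_measure_unique => B C mB mC; rewrite -XY.
have X1' := integrable_distribution (X := XX) X1.
have Y1' := integrable_distribution (X := YY) Y1.
have XY1 : P.-integrable setT (EFin \o (X \* Y)%R).
  apply/integrableP; split; first exact/measurable_EFinP/measurable_funM.
  rewrite -[X in X < _](@ge0_integral_distribution _ _ _ _ _ P ZZ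
    (fun z => `|(mulz z)%:E|)) //; last exact/measurable_EFinP/measurableT_comp.
  rewrite -(eq_measure_integral _ (fun A mA _ => law_prod A mA)).
  by case/integrableP: (integrable_prod_mulr X1' Y1').
rewrite (expectation_distribution (X := XX)) // (expectation_distribution (X := YY)) //.
rewrite -integral_prod_mulr // (eq_measure_integral _ (fun A mA _ => law_prod A mA)).
by rewrite unlock (integral_distribution (X := ZZ) (proj2 (measurable_EFinP _ _) mmulz)).
Qed.

End independence.

Section square_integrable.
Local Open Scope ereal_scope.
Context d (Omega : measurableType d) (R : realType) (P : probability Omega R).
Local Notation L2 := (Lfun P 2%:E).

(* side condition of the subspace instances of [Lfun P p] *)
Let one_le2 : 1 <= 2%:E :> \bar R. Proof. by rewrite lee_fin ler1n. Qed.
Local Hint Resolve one_le2 : core.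

Lemma Lfun_dominated (r : R) (f g : Omega -> R) : (0 <= r)%R ->
  measurable_fun setT f -> (forall w, `|f w| <= `|g w|)%R ->
  g \in Lfun P r%:E -> f \in Lfun P r%:E.
Proof.
move=> r0 mf fg /andP[]; rewrite !inE /finite_norm unlock /= => mg g_fin.
apply/andP; split; rewrite inE //= /finite_norm unlock /=.
apply: le_lt_trans g_fin; apply: gt0_ler_poweR.
- by rewrite invr_ge0.
- by rewrite in_itv /= leey integral_ge0 // => w _; exact: poweR_ge0.
- by rewrite in_itv /= leey integral_ge0 // => w _; exact: poweR_ge0.
apply: ge0_le_integral => //.
- apply/measurable_EFinP/(@measurableT_comp _ _ _ _ _ _ (fun x : R => x `^ r)%R) => //.
  exact: measurableT_comp.
- apply/measurable_EFinP/(@measurableT_comp _ _ _ _ _ _ (fun x : R => x `^ r)%R) => //.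
  exact: measurableT_comp.
by move=> w _; rewrite lee_fin ge0_ler_powR.
Qed.

Lemma Lfun2_Lfun1 (X : Omega -> R) : X \in L2 -> X \in Lfun P 1.
Proof. exact/Lfun_subset12/fin_num_measure. Qed.

Lemma covarianceZr2 (a : R) (X Y : Omega -> R) : X \in L2 -> Y \in L2 ->
  covariance P X (a \o* Y)%R = a%:E * covariance P X Y.
Proof.
move=> X2 Y2; apply: covarianceZr; [exact: Lfun2_Lfun1|exact: Lfun2_Lfun1|].
exact: Lfun2_mul_Lfun1.
Qed.

Lemma covariance_sumr (I : finType) (A : {set I}) (X : Omega -> R)
    (F : I -> Omega -> R) : X \in L2 -> (forall s, F s \in L2) ->
  covariance P X (\sum_(s in A) F s)%R = \sum_(s in A) covariance P X (F s).
Proof.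
move=> X2 F2.
suff [] : (\sum_(s in A) F s)%R \in L2 /\
    covariance P X (\sum_(s in A) F s)%R = \sum_(s in A) covariance P X (F s)
  by [].
elim/big_rec2: _ => [|s c G _ [G2 <-]].
  by split; [exact: rpred0 | exact: (covariance_cst_r _ _ 0%R)].
by split; [rewrite rpredD | rewrite covarianceDr].
Qed.

Lemma covariance_uncorrelated_sum (I : finType) (A : {set I})
    (X Y : Omega -> R) (Z : I -> Omega -> R) (a b : I -> R) (c : R) :
  X \in L2 -> Y \in L2 -> (forall s, Z s \in L2) ->
  (forall s, covariance P X (Z s) = 0) -> (forall s, covariance P Y (Z s) = 0) ->
  (forall s r, s \in A -> r \in A ->
     covariance P (Z s) (Z r) = (if s == r then c else 0)%:E) ->
  covariance P (X \+ \sum_(s in A) a s \o* Z s)%R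
               (Y \+ \sum_(s in A) b s \o* Z s)%R
  = covariance P X Y + (c * \sum_(s in A) a s * b s)%:E.
Proof.
move=> X2 Y2 Z2 XZ YZ ZZ.
have uZ2 (u : I -> R) s : (u s \o* Z s)%R \in L2 by rewrite Lfun_scale ?ler1n.
have sum2 (u : I -> R) : (\sum_(s in A) u s \o* Z s)%R \in L2 by rewrite rpred_sum.
have cross (U : Omega -> R) u : U \in L2 -> (forall s, covariance P U (Z s) = 0) ->
    covariance P U (\sum_(s in A) u s \o* Z s)%R = 0.
  move=> U2 UZ; rewrite covariance_sumr // big1 // => s _.
  by rewrite covarianceZr2 // UZ mule0.
have diag : covariance P (\sum_(s in A) a s \o* Z s)%R (\sum_(s in A) b s \o* Z s)%R
    = (c * \sum_(s in A) a s * b s)%:E.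
  rewrite covarianceC covariance_sumr // mulr_sumr -sumEFin.
  apply: eq_bigr => s sA; rewrite covarianceZr2 // covarianceC covariance_sumr //.
  rewrite (bigD1 s) //= big1 ?adde0 => [|r /andP[rA rs]]; last first.
    by rewrite covarianceZr2 // ZZ // eq_sym (negbTE rs) mule0.
  by rewrite covarianceZr2 // ZZ // eqxx -!EFinM mulrA mulrC.
rewrite covarianceDl ?rpredD // !covarianceDr //.
by rewrite diag (covarianceC P (\sum_(s in A) a s \o* Z s)%R) !cross // adde0 add0e.
Qed.

End square_integrable.

Section random_injection.
Local Open Scope ereal_scope.
Context d (Omega : measurableType d) (R : realType) (P : probability Omega R).
Variables (n : nat) (theta : 'I_n -> Omega -> R) (S : Omega -> 'I_n) (G : Omega -> R).
Local Notation L2 := (Lfun P 2%:E).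
Hypotheses (theta2 : forall i, theta i \in L2) (G2 : G \in L2)
  (mS : forall s, measurable (S @^-1` [set s]))
  (indep : mutually_indep3 P theta S G) (EG0 : 'E_P[G] = 0).

Definition on_bus (s : 'I_n) (X : Omega -> R) : Omega -> R :=
  fun w => if S w == s then X w else 0%R.

Lemma on_bus_cst1 s : on_bus s (cst 1%R) = \1_(S @^-1` [set s]).
Proof.
apply/funext => w; rewrite /on_bus indicE /=.
by case: eqP => h; [rewrite mem_set | rewrite memNset].
Qed.

Lemma on_bus_mul s (X Y : Omega -> R) : (on_bus s X \* Y)%R = on_bus s (X \* Y)%R.
Proof. by apply/funext => w; rewrite /on_bus /=; case: ifP; rewrite ?mul0r. Qed.

Lemma sum_on_bus (A : {set 'I_n}) (a : 'I_n -> R) w : S w \in A ->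
  (\sum_(s in A) a s \o* on_bus s G)%R w = (a (S w) * G w)%R.
Proof.
move=> SwA; rewrite fct_sumE (bigD1 (S w)) //= big1 ?addr0.
  by rewrite /on_bus eqxx mulrC.
by move=> s /andP[_ sS]; rewrite /on_bus eq_sym (negbTE sS) mul0r.
Qed.

Lemma measurable_on_bus s (X : Omega -> R) :
  measurable_fun setT X -> measurable_fun setT (on_bus s X).
Proof.
move=> mX; have -> : on_bus s X = (\1_(S @^-1` [set s]) \* X)%R.
  by rewrite -on_bus_cst1 on_bus_mul; apply/funext => w; rewrite /on_bus /= mul1r.
by apply: measurable_funM => //; exact: measurable_indic.
Qed.

Lemma Lfun_on_bus s (X : Omega -> R) (r : R) : (0 <= r)%R ->
  X \in Lfun P r%:E -> on_bus s X \in Lfun P r%:E.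
Proof.
move=> r0 Xr; apply: (Lfun_dominated r0 _ _ Xr).
  exact/measurable_on_bus/(Lfun_measurable Xr).
by move=> w; rewrite /on_bus; case: ifP; rewrite ?normr0.
Qed.

Lemma mutually_indep3_coord i (A : set R) (B : set 'I_n) (C : set R) :
  measurable A -> measurable C ->
  P (theta i @^-1` A `&` S @^-1` B `&` G @^-1` C)
  = P (theta i @^-1` A `&` S @^-1` B) * P (G @^-1` C).
Proof.
move=> mA mC.
pose Ai j := if j == i then A else setT.
have mAi j : measurable (Ai j) by rewrite /Ai; case: eqP.
have rect : [set w | forall j, Ai j (theta j w)] = theta i @^-1` A.
  apply/seteqP; split => w /=; first by move=> /(_ i); rewrite /Ai eqxx.
  by move=> Aw j; rewrite /Ai; case: eqP => [->|].
have prod3 := indep B mAi mC; have prod2 := indep B mAi measurableT.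
rewrite /= rect in prod3 prod2.
rewrite preimage_setT setIT probability_setT mule1 in prod2.
by rewrite prod3 prod2.
Qed.

Lemma independent_on_bus i s (f : R -> R) : measurable_fun setT f ->
  independent_rv P (on_bus s (f \o theta i)) G.
Proof.
move=> mf A C mA mC.
have mth := Lfun_measurable (theta2 i).
have mfA := measurable_funT_preimage mf mA.
have m0A : measurable ((cst 0%R : R -> R) @^-1` A).
  exact: measurable_funT_preimage.
have mGC := measurable_funT_preimage (Lfun_measurable G2) mC.
set E1 := theta i @^-1` (f @^-1` A) `&` S @^-1` [set s].
set E2 := theta i @^-1` (cst 0%R @^-1` A) `&` S @^-1` (~` [set s]).
have mE1 : measurable E1 by apply: measurableI => //; exact: measurable_funT_preimage.
have mE2 : measurable E2.
  apply: measurableI; first exact: measurable_funT_preimage.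
  by rewrite -preimage_setC; exact: measurableC.
have mE1G : measurable (E1 `&` G @^-1` C) by exact: measurableI.
have mE2G : measurable (E2 `&` G @^-1` C) by exact: measurableI.
have E12 : E1 `&` E2 = set0 by apply/seteqP; split => w //= [[_ Sws] [_]].
have E12G : (E1 `&` G @^-1` C) `&` (E2 `&` G @^-1` C) = set0.
  by rewrite setIACA E12 set0I.
have -> : on_bus s (f \o theta i) @^-1` A = E1 `|` E2.
  apply/seteqP; split => w; rewrite /E1 /E2 /on_bus /=.
    by case: eqP => [-> h|ne h]; [left|right].
  by move=> [[h1 /= ->]|[h1 /= /eqP/negbTE ->]]; rewrite ?eqxx.
have E1G : P (E1 `&` G @^-1` C) = P E1 * P (G @^-1` C).
  exact: (mutually_indep3_coord i [set s] mfA mC).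
have E2G : P (E2 `&` G @^-1` C) = P E2 * P (G @^-1` C).
  exact: (mutually_indep3_coord i (~` [set s]) m0A mC).
have U : P (E1 `|` E2) = P E1 + P E2 by exact: measureU.
have UG : P ((E1 `&` G @^-1` C) `|` (E2 `&` G @^-1` C))
    = P (E1 `&` G @^-1` C) + P (E2 `&` G @^-1` C) by exact: measureU.
by rewrite setIUl UG U E1G E2G ge0_muleDl.
Qed.

Lemma expectation_on_bus_comp s (g : R -> R) : measurable_fun setT g ->
  (g \o G) \in Lfun P 1 ->
  'E_P[on_bus s (g \o G)] = P (S @^-1` [set s]) * 'E_P[g \o G].
Proof.
move=> mg gG1.
have -> : on_bus s (g \o G) = (on_bus s (cst 1%R) \* (g \o G))%R.
  by rewrite on_bus_mul; apply/funext => w; rewrite /on_bus /= mul1r.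
(* [on_bus s (cst 1)] is [on_bus s (cst 1 \o theta s)]; any coordinate of
   theta would do. *)
rewrite expectation_mul_independent //.
- by rewrite on_bus_cst1 expectation_indic.
- by apply/Lfun2_Lfun1/Lfun_on_bus => //; exact: Lfun_cst.
have m1 : measurable_fun setT (cst 1%R : R -> R) by exact: measurable_cst.
exact: (independent_rv_comp (@measurable_id _ _ setT) mg (independent_on_bus s s m1)).
Qed.

Lemma expectation_on_bus_G s : 'E_P[on_bus s G] = 0.
Proof.
rewrite (expectation_on_bus_comp s (@measurable_id _ _ setT)) ?EG0 ?mule0 //.
exact: Lfun2_Lfun1.
Qed.

Lemma expectation_on_bus_theta_G i s : 'E_P[on_bus s (theta i) \* G] = 0.
Proof.
rewrite (expectation_mul_independent (X := on_bus s (theta i))) ?EG0 ?mule0 //.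
- exact/Lfun2_Lfun1/Lfun_on_bus.
- exact: Lfun2_Lfun1.
exact: (independent_on_bus i s (@measurable_id _ _ setT)).
Qed.

Lemma Lfun2_on_bus_G s : on_bus s G \in L2.
Proof. exact: Lfun_on_bus. Qed.

Lemma covariance_theta_on_bus i s : covariance P (theta i) (on_bus s G) = 0.
Proof.
have Z2 := Lfun2_on_bus_G s.
rewrite covarianceE; last exact: Lfun2_mul_Lfun1.
- rewrite expectation_on_bus_G mule0 sube0 -(expectation_on_bus_theta_G i s).
  congr expectation; rewrite on_bus_mul; apply/funext => w.
  by rewrite !fctE /on_bus /=; case: ifP; rewrite ?mulr0.
- exact/Lfun2_Lfun1/theta2.
exact: Lfun2_Lfun1.
Qed.

Lemma covariance_on_bus s r : covariance P (on_bus s G) (on_bus r G)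
  = if s == r then P (S @^-1` [set s]) * 'V_P[G] else 0.
Proof.
have Z2 := Lfun2_on_bus_G.
rewrite covarianceE; last exact: Lfun2_mul_Lfun1.
- rewrite expectation_on_bus_G mul0e sube0.
  have [<-|sr] := eqVneq s r.
    have -> : (on_bus s G * on_bus s G)%R = on_bus s ((fun y => y * y) \o G)%R.
      by apply/funext => w; rewrite !fctE /on_bus /=; case: ifP; rewrite ?mul0r.
    rewrite expectation_on_bus_comp; last exact: Lfun2_mul_Lfun1.
      by rewrite varianceE // EG0 expe2 mule0 sube0 expr2.
    exact: measurable_funM.
  have -> : (on_bus s G * on_bus r G)%R = cst 0%R.
    apply/funext => w; rewrite !fctE /on_bus /=.
    case: eqP => [->|_]; last by rewrite mul0r.
    by rewrite (negbTE sr) mulr0.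
  by rewrite expectation_cst.
- exact: Lfun2_Lfun1.
exact: Lfun2_Lfun1.
Qed.

End random_injection.

Theorem lemma8 (R : realType) (n : nat) (e : rel 'I_n) (x : 'I_n -> 'I_n -> R)
  (Tset : {set 'I_n}) (t : 'I_n)
  (v : 'I_n -> 'cV[R]_n)
  (d : measure_display) (Omega : measurableType d) (P : probability Omega R)
  (theta : 'I_n -> Omega -> R) (S : Omega -> 'I_n) (G : Omega -> R)
  (sigma2 : R) (thetah : 'I_n -> Omega -> R) :
  is_network e x ->
  (2 <= #|Tset|)%N -> t \in Tset ->
  (forall s, s \in Tset :\ t -> is_vst (Bhat e x) s t (v s)) ->
  (forall i, theta i \in Lfun P 2%:E) ->
  (forall w, theta t w = 0) ->
  (forall w, S w \in Tset :\ t) ->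
  (forall i, measurable (S @^-1` [set i])) ->
  (forall s, s \in Tset :\ t ->
     P (S @^-1` [set s]) = ((#|Tset :\ t|%:R)^-1)%:E) ->
  G \in Lfun P 2%:E ->
  ('E_P[G] = 0)%E ->
  'V_P[G] = sigma2%:E ->
  mutually_indep3 P theta S G ->
  (forall w, thetah t w = 0) ->
  (forall w, Bhat e x *m rvec thetah w
             = Bhat e x *m rvec theta w + G w *: uvec R (S w) t) ->
  covmx P thetah
  = covmx P theta
    + (sigma2 / (#|Tset|.-1)%:R) *: \sum_(s in Tset :\ t) (v s *m (v s)^T).
Proof.
move=> net _ tT hv theta2 tht0 hS mS PS G2 EG0 VG indep thh0 hB.
set T' := Tset :\ t.
have cardT' : #|Tset|.-1 = #|T'| by rewrite /T' (cardsD1 t Tset) tT.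
have decomp i : thetah i = (theta i \+ \sum_(s in T') v s i 0 \o* on_bus S s G)%R.
  apply/funext => w; rewrite /= sum_on_bus // mulrC.
  have grounded (X : 'I_n -> Omega -> R) :
      (forall w, X t w = 0) -> rvec X w t 0 = 0 by rewrite mxE.
  have /matrixP/(_ i 0) := Bhat_grounded_solution net (hv _ (hS w)) (hB w)
    (grounded _ thh0) (grounded _ tht0).
  by rewrite !mxE.
have cov_on_bus s r : s \in T' -> r \in T' ->
    covariance P (on_bus S s G) (on_bus S r G)
    = (if s == r then #|T'|%:R^-1 * sigma2 else 0)%:E.
  move=> sT _; rewrite (covariance_on_bus theta2 G2 mS indep EG0).
  by case: eqP => // _; rewrite PS // VG -EFinM.
have cov_fin i j : covariance P (theta i) (theta j) \is a fin_num.
  apply: covariance_fin_num; [exact/Lfun2_Lfun1/theta2|exact/Lfun2_Lfun1/theta2|].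
  exact: Lfun2_mul_Lfun1 (theta2 i) (theta2 j).
apply/matrixP => i j; rewrite !mxE summxE !decomp.
have Z2 s : on_bus S s G \in Lfun P 2%:E by exact: Lfun2_on_bus_G.
have cov_theta := covariance_theta_on_bus theta2 G2 mS indep EG0.
rewrite (covariance_uncorrelated_sum _ _ (theta2 i) (theta2 j) Z2 (cov_theta i)
  (cov_theta j) cov_on_bus).
rewrite -(fineK (cov_fin i j)) -EFinD /= cardT' [sigma2 / _]mulrC.
by congr (_ + _ * _); apply: eq_bigr => s _; rewrite !mxE big_ord1 !mxE.
Qed.
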